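(* Let $S$ be a monoid, let $r_h$ be a Hoehnke radical of $S$-acts, and let $r_k$ be the Kurosh–Amitsur radical determined by the radical class $\mathbb{R}_{r_h}$, i.e. $r_k(A)=\bigvee\{\rho\in\mathrm{Con}(A): \rho \text{ a Rees congruence with } \Sigma_\rho\subseteq\mathbb{R}_{r_h}\}$ (so that $\mathbb{R}_{r_k}=\mathbb{R}_{r_h}$). Then, with respect to the order $r\le r'$ iff $r(A)\subseteq r'(A)$ for every $S$-act $A$: (1) $r_k=\bigvee\{r: r \text{ is a Kurosh–Amitsur radical with } r\le r_h\}$; (2) $r_k=\bigwedge\{r: r \text{ is a Hoehnke radical with } \mathbb{R}_r=\mathbb{R}_{r_h}\}$.
   Context: An $S$-act over a monoid $S$ is a set $A$ with an action $(s,a)\mapsto sa$ satisfying $s(ta)=(st)a$ and $1a=a$; homomorphisms are action-preserving maps. An $S$-act is trivial if $|A|\le1$. $\mathrm{Con}(A)$ is the lattice of congruences on $A$, with least $\Delta_A$ and greatest $\nabla_A=A\times A$. A Rees congruence is a congruence each of whose classes is a subact or a singleton; $\Sigma_\rho$ is the set of classes of $\rho$ that are non-trivial subacts. For a class $\mathbb{C}$, a $\mathbb{C}$-system of $A$ is a set of pairwise disjoint non-trivial subacts of $A$ each in $\mathbb{C}$. A (normal) Hoehnke radical is an assignment $r$ giving each $S$-act $A$ a congruence $r(A)$ such that (i) for every homomorphism $f:A\to B$, $(a,a')\in r(A)$ implies $(f(a),f(a'))\in r(B)$, and (ii) $r(A/r(A))=\Delta_{A/r(A)}$. Its radical class is $\mathbb{R}_r=\{A: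 r(A)=\nabla_A\}$. A Hoehnke radical $r$ is Kurosh–Amitsur if (i) every $r(A)$ is a Rees congruence; (ii) $r(B)=\nabla_B$ for all $B\in\Sigma_{r(A)}$; (iii) for every $\mathbb{R}_r$-system $\Sigma$ of $A$ and every $B\in\Sigma$ there is $C\in\Sigma_{r(A)}$ with $B\le C$. *)

From Stdlib Require Import FunctionalExtensionality PropExtensionality ProofIrrelevance.
Set Implicit Arguments.
Unset Strict Implicit.

Record monoid := Monoid {
  mcar :> Type;
  mmul : mcar -> mcar -> mcar;
  mone : mcar;
  mmulA : forall x y z, mmul x (mmul y z) = mmul (mmul x y) z;
  mmul1l : forall x, mmul mone x = x;
  mmul1r : forall x, mmul x mone = x }.

Record act (S : monoid) := Act {
  acar :> Type;
  actf : S -> acar -> acar;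
  actA : forall s t a, actf s (actf t a) = actf (mmul s t) a;
  act1 : forall a, actf (mone S) a = a }.
Arguments actf {S} _ _ _.

Section Acts.
Variable S : monoid.

Definition is_hom (A B : act S) (f : A -> B) : Prop :=
  forall s a, f (actf A s a) = actf B s (f a).

Definition is_congruence (A : act S) (rho : A -> A -> Prop) : Prop :=
  (forall a, rho a a) /\ (forall a b, rho a b -> rho b a) /\
  (forall a b c, rho a b -> rho b c -> rho a c) /\
  (forall s a b, rho a b -> rho (actf A s a) (actf A s b)).

Definition rel_eq (X : Type) (r r' : X -> X -> Prop) : Prop :=
  forall x y, r x y <-> r' x y.

Definition cls (A : act S) (rho : A -> A -> Prop) (a : A) : A -> Prop := rho a.

(* P is (the carrier of) a subact: closed under the action *)
Definition closed (A : act S) (P : A -> Prop) : Prop :=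
  forall s x, P x -> P (actf A s x).

Definition nontrivial (A : Type) (P : A -> Prop) : Prop :=
  exists x y, P x /\ P y /\ x <> y.

Definition sub_actf (A : act S) (P : A -> Prop) (H : closed P)
  (s : S) (x : {x : A | P x}) : {x : A | P x} :=
  exist _ (actf A s (proj1_sig x)) (H s _ (proj2_sig x)).

Lemma sub_actA (A : act S) (P : A -> Prop) (H : closed P) s t x :
  sub_actf H s (sub_actf H t x) = sub_actf H (mmul s t) x.
Proof.
destruct x as [x hx]; unfold sub_actf; simpl.
apply eq_sig_hprop; [intros; apply proof_irrelevance|]; simpl; apply actA.
Qed.

Lemma sub_act1 (A : act S) (P : A -> Prop) (H : closed P) x :
  sub_actf H (mone S) x = x.
Proof.
destruct x as [x hx]; unfold sub_actf; simpl.
apply eq_sig_hprop; [intros; apply proof_irrelevance|]; simpl; apply act1.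
Qed.

Definition subact (A : act S) (P : A -> Prop) (H : closed P) : act S :=
  @Act S {x : A | P x} (sub_actf H) (@sub_actA A P H) (@sub_act1 A P H).

(* Quotient act A/rho, carrier = set of rho-classes *)
Definition qcar (A : act S) (rho : A -> A -> Prop) : Type :=
  {P : A -> Prop | exists a, forall x, P x <-> rho a x}.

Definition qact_pred (A : act S) (rho : A -> A -> Prop) (s : S) (P : A -> Prop) : A -> Prop :=
  fun x => exists a, P a /\ rho (actf A s a) x.

Lemma qact_ok (A : act S) (rho : A -> A -> Prop) (Hc : is_congruence rho)
  (s : S) (P : qcar rho) :
  exists a, forall x, qact_pred rho s (proj1_sig P) x <-> rho a x.
Proof.
destruct P as [P [a0 Ha0]]; simpl.
destruct Hc as [Hr [Hs [Ht Hact]]].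
exists (actf A s a0); intro x; unfold qact_pred; split.
- intros [a [Pa Hax]]. apply Ha0 in Pa. eapply Ht; [apply Hact; exact Pa| exact Hax].
- intros H. exists a0. split; [apply Ha0, Hr| exact H].
Qed.

Definition qactf (A : act S) (rho : A -> A -> Prop) (Hc : is_congruence rho)
  (s : S) (P : qcar rho) : qcar rho :=
  exist _ (qact_pred rho s (proj1_sig P)) (qact_ok Hc s P).

Lemma qactA (A : act S) (rho : A -> A -> Prop) (Hc : is_congruence rho) s t P :
  qactf Hc s (qactf Hc t P) = qactf Hc (mmul s t) P.
Proof.
apply eq_sig_hprop; [intros; apply proof_irrelevance|].
destruct P as [P [a0 Ha0]]; simpl.
destruct Hc as [Hr [Hs [Ht Hact]]].
apply functional_extensionality; intro x; apply propositional_extensionality.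
unfold qact_pred; split.
- intros [b [[a [Pa Hab]] Hbx]]. exists a; split; [exact Pa|].
  rewrite <- actA. eapply Ht; [apply Hact; exact Hab| exact Hbx].
- intros [a [Pa Hax]]. exists (actf A t a). split.
  + exists a; split; [exact Pa| apply Hr].
  + rewrite actA; exact Hax.
Qed.

Lemma qact1 (A : act S) (rho : A -> A -> Prop) (Hc : is_congruence rho) P :
  qactf Hc (mone S) P = P.
Proof.
apply eq_sig_hprop; [intros; apply proof_irrelevance|].
destruct P as [P [a0 Ha0]]; simpl.
destruct Hc as [Hr [Hs [Ht Hact]]].
apply functional_extensionality; intro x; apply propositional_extensionality.
unfold qact_pred; split.
- intros [a [Pa Hax]]. rewrite act1 in Hax. apply Ha0. apply Ha0 in Pa. eapply Ht; eauto.
- intros Px. exists x; split; [exact Px| rewrite act1; apply Hr].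
Qed.

Definition quot_act (A : act S) (rho : A -> A -> Prop) (Hc : is_congruence rho) : act S :=
  @Act S (qcar rho) (qactf Hc) (@qactA A rho Hc) (@qact1 A rho Hc).

Unset Implicit Arguments.
Record hoehnke := Hoehnke {
  rad :> forall A : act S, A -> A -> Prop;
  rad_cong : forall A : act S, @is_congruence A (rad A);
  rad_hom : forall (A B : act S) (f : A -> B), is_hom f ->
              forall a a', rad A a a' -> rad B (f a) (f a');
  rad_quot : forall A : act S,
      rel_eq (rad (@quot_act A (rad A) (rad_cong A)))
             (@eq (@quot_act A (rad A) (rad_cong A))) }.

Set Implicit Arguments.
(* radical class membership: r(B) = nabla_B *)
Definition in_class (r : forall A : act S, A -> A -> Prop) (B : act S) : Prop :=
  forall x y : B, r B x y.

Definition rees (A : act S) (rho : A -> A -> Prop) : Prop :=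
  is_congruence rho /\
  forall a : A, closed (cls rho a) \/ (forall x, cls rho a x -> x = a).

Definition sigma_sub (r : forall A : act S, A -> A -> Prop)
  (A : act S) (rho : A -> A -> Prop) : Prop :=
  forall (a : A) (H : closed (cls rho a)), nontrivial (cls rho a) -> in_class r (subact H).

Definition system (r : forall A : act S, A -> A -> Prop) (A : act S)
  (Sys : (A -> Prop) -> Prop) : Prop :=
  (forall P, Sys P -> exists H : closed P, nontrivial P /\ in_class r (subact H)) /\
  (forall P Q, Sys P -> Sys Q -> (exists x, P x /\ Q x) -> forall x, P x <-> Q x).

Definition is_KA (r : hoehnke) : Prop :=
  (forall A : act S, rees (r A)) /\
  (forall A : act S, sigma_sub r (r A)) /\
  (forall (A : act S) (Sys : (A -> Prop) -> Prop), system r Sys ->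
     forall B, Sys B ->
       exists a : A, (closed (cls (r A) a) /\ nontrivial (cls (r A) a)) /\
                     (forall x, B x -> cls (r A) a x)).

Definition rk (rh : hoehnke) (A : act S) : A -> A -> Prop :=
  fun x y => forall theta : A -> A -> Prop, is_congruence theta ->
    (forall rho : A -> A -> Prop, rees rho -> sigma_sub rh rho ->
       forall u v, rho u v -> theta u v) ->
    theta x y.

Definition rle (r r' : forall A : act S, A -> A -> Prop) : Prop :=
  forall (A : act S) (x y : A), r A x y -> r' A x y.

Definition same_class (r r' : forall A : act S, A -> A -> Prop) : Prop :=
  forall B : act S, in_class r B <-> in_class r' B.

End Acts.

From Stdlib Require Import FunctionalExtensionality PropExtensionality ProofIrrelevance Classical.

(* r_k(A) relates x and y iff x = y or x and y lie in a common subact of A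
   belonging to R_{r_h}.  Two radical subacts sharing a point have a radical
   union, so this relation is a Rees congruence; it is the largest Rees
   congruence whose non-trivial subact classes are radical, hence it is
   r_k(A).  It is a Hoehnke radical: homomorphic images of radical subacts are
   radical, and a radical subact of A/r_k(A) pulls back to a radical subact of
   A, because an act is radical as soon as it maps onto a radical act with a
   kernel inside its radical.  This radical has class R_{r_h}, is
   Kurosh-Amitsur, and lies below r_h and below every Hoehnke radical with
   class R_{r_h}; the four inequalities follow. *)

Section Radicals.
Context {S : monoid}.

Lemma sig_ext {X : Type} {P : X -> Prop} (x y : {a | P a}) :
  proj1_sig x = proj1_sig y -> x = y.
Proof. intro e; apply eq_sig_hprop; [intros; apply proof_irrelevance | exact e]. Qed.

Lemma pred_ext {X : Type} (P Q : X -> Prop) : (forall x, P x <-> Q x) -> P = Q.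
Proof.
intro e; apply functional_extensionality; intro x; apply propositional_extensionality, e.
Qed.

Definition cl {A : act S} (rho : A -> A -> Prop) (a : A) : qcar rho :=
  exist _ (rho a) (ex_intro _ a (fun x => iff_refl (rho a x))).

Lemma qcar_cl {A : act S} {rho : A -> A -> Prop} (X : qcar rho) :
  exists a, X = cl rho a.
Proof. destruct X as [X [a Ha]]; exists a; apply sig_ext, pred_ext, Ha. Qed.

Lemma cl_eq {A : act S} {rho : A -> A -> Prop} (Hc : is_congruence rho) (a b : A) :
  cl rho a = cl rho b <-> rho a b.
Proof.
destruct Hc as [Rr [Rs [Rt _]]]; split.
- intro e; change (proj1_sig (cl rho a) b); rewrite e; apply Rr.
- intro hab; apply sig_ext, pred_ext; intro x; simpl; split; intro h.
  + exact (Rt _ _ _ (Rs _ _ hab) h).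
  + exact (Rt _ _ _ hab h).
Qed.

Lemma cl_hom {A : act S} {rho : A -> A -> Prop} (Hc : is_congruence rho) :
  @is_hom S A (quot_act Hc) (cl rho).
Proof.
pose proof Hc as [Rr [_ [Rt Rc]]].
intros s a; apply sig_ext, pred_ext; intro x; simpl; unfold qact_pred; split.
- intro h; exists a; split; [apply Rr | exact h].
- intros [b [hab hb]]; exact (Rt _ _ _ (Rc s _ _ hab) hb).
Qed.

Lemma closed_all (B : act S) : closed (A:=B) (fun _ => True).
Proof. intros s x _; exact I. Qed.

Lemma closed_union {A : act S} {P Q : A -> Prop} :
  closed P -> closed Q -> closed (fun x => P x \/ Q x).
Proof. intros HP HQ s x [Px | Qx]; [left; apply HP, Px | right; apply HQ, Qx]. Qed.

Lemma closed_image {A B : act S} {f : A -> B} {P : A -> Prop} :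
  is_hom f -> closed P -> closed (fun b => exists a, P a /\ f a = b).
Proof. intros Hf HP s b [a [Pa <-]]; exists (actf A s a); split; [apply HP, Pa | apply Hf]. Qed.

Lemma closed_preimage {A : act S} {rho : A -> A -> Prop} {Hc : is_congruence rho}
  {Q : quot_act Hc -> Prop} :
  closed Q -> closed (fun a => Q (cl rho a)).
Proof. intros HQ s a Qa; rewrite (cl_hom Hc); apply HQ, Qa. Qed.

Section RadicalClass.
Variable r : hoehnke S.

Lemma in_class_hom {B C : act S} {f : B -> C} :
  is_hom f -> in_class r B -> forall x y, r C (f x) (f y).
Proof. intros Hf HB x y; exact (rad_hom _ r _ _ f Hf x y (HB x y)). Qed.

Lemma in_class_surj {B C : act S} (f : B -> C) :
  is_hom f -> (forall c, exists b, f b = c) -> in_class r B -> in_class r C.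
Proof.
intros Hf Hsurj HB c c'.
destruct (Hsurj c) as [b <-], (Hsurj c') as [b' <-].
exact (in_class_hom Hf HB b b').
Qed.

Lemma in_class_star {B : act S} (b : B) : (forall x, r B x b) -> in_class r B.
Proof.
intros H x y; destruct (rad_cong _ r B) as [_ [Rs [Rt _]]].
exact (Rt _ _ _ (H x) (Rs _ _ (H y))).
Qed.

Lemma in_class_subact {A : act S} {P Q : A -> Prop} (HP : closed P) (HQ : closed Q)
  (sub : forall x, P x -> Q x) :
  in_class r (subact HP) ->
  forall x y (Qx : Q x) (Qy : Q y), P x -> P y -> r (subact HQ) (exist Q x Qx) (exist Q y Qy).
Proof.
intros HPr x y Qx Qy Px Py.
assert (Hincl : @is_hom S (subact HP) (subact HQ)
                  (fun z => exist Q (proj1_sig z) (sub _ (proj2_sig z))))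
  by (intros s z; apply sig_ext; reflexivity).
rewrite (proof_irrelevance _ Qx (sub x Px)), (proof_irrelevance _ Qy (sub y Py)).
exact (in_class_hom Hincl HPr (exist P x Px) (exist P y Py)).
Qed.

Lemma in_class_union {A : act S} {P Q : A -> Prop} (HP : closed P) (HQ : closed Q) {b : A} :
  P b -> Q b -> in_class r (subact HP) -> in_class r (subact HQ) ->
  in_class r (subact (closed_union HP HQ)).
Proof.
intros Pb Qb HPr HQr.
apply in_class_star with (exist _ b (or_introl Pb)).
intros [x [Px | Qx]].
- exact (in_class_subact HP _ (fun _ h => or_introl h) HPr _ _ _ _ Px Pb).
- exact (in_class_subact HQ _ (fun _ h => or_intror h) HQr _ _ _ _ Qx Qb).
Qed.

Lemma in_class_image {A B : act S} {f : A -> B} (Hf : is_hom f) {P : A -> Prop} (HP : closed P) :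
  in_class r (subact HP) -> in_class r (subact (closed_image Hf HP)).
Proof.
apply in_class_surj with
  (f := fun x => exist _ (f (proj1_sig x)) (ex_intro _ (proj1_sig x) (conj (proj2_sig x) eq_refl))).
- intros s x; apply sig_ext, Hf.
- intros [b [a [Pa <-]]]; exists (exist P a Pa); apply sig_ext; reflexivity.
Qed.

(* Sending c to the r-class of any k-preimage of c is a homomorphism
   C -> B/r(B); as C is radical it is constant, so r(B) is total. *)
Lemma in_class_ext {B C : act S} (k : B -> C) :
  is_hom k -> (forall c, exists b, k b = c) -> (forall x y, k x = k y -> r B x y) ->
  in_class r C -> in_class r B.
Proof.
intros Hk Hsurj Hker HC x y.
destruct (rad_cong _ r B) as [Rr [Rs [Rt Rc]]].
set (g0 := fun c (z : B) => exists x', k x' = c /\ r B x' z).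
assert (g_cls : forall c, exists x0, forall z, g0 c z <-> r B x0 z).
{ intro c; destruct (Hsurj c) as [x0 <-]; exists x0; intro z; split.
  - intros [x' [e h]]; exact (Rt _ _ _ (Hker _ _ (eq_sym e)) h).
  - intro h; exists x0; split; [reflexivity | exact h]. }
set (g := fun c => exist _ (g0 c) (g_cls c) : quot_act (rad_cong _ r B)).
assert (Hg : is_hom g).
{ intros s c; apply sig_ext, pred_ext; intro z; simpl; unfold g0, qact_pred; split.
  - intros [x' [e h]]; destruct (Hsurj c) as [x0 e0]; exists x0; split.
    + exists x0; split; [exact e0 | apply Rr].
    + apply Rt with x'; [apply Hker; rewrite Hk, e0, e; reflexivity | exact h].
  - intros [a [[x' [e h]] h']]; exists (actf B s x'); split.
    + rewrite Hk, e; reflexivity.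
    + exact (Rt _ _ _ (Rc s _ _ h) h').
}
assert (e : g (k x) = g (k y)) by apply (rad_quot _ r B), (rad_hom _ r _ _ g Hg), HC.
assert (h : g0 (k x) y).
{ change (proj1_sig (g (k x)) y); rewrite e; exists y; split; [reflexivity | apply Rr]. }
destruct h as [x' [e' h]].
exact (Rt _ _ _ (Hker _ _ (eq_sym e')) h).
Qed.

End RadicalClass.

Section RadicalSubacts.
Variable r : hoehnke S.

Definition radsub_rel (A : act S) (x y : A) : Prop :=
  x = y \/ exists (P : A -> Prop) (HP : closed P), P x /\ P y /\ in_class r (subact HP).

Lemma radsub_rel_cong (A : act S) : is_congruence (radsub_rel A).
Proof.
split; [|split; [|split]].
- intro a; left; reflexivity.
- intros a b [-> | [P [HP [Pa [Pb HPr]]]]]; [left; reflexivity | right; exists P, HP; auto].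
- intros a b c [-> | [P [HP [Pa [Pb HPr]]]]]; [tauto|].
  intros [<- | [Q [HQ [Qb [Qc HQr]]]]]; right; [exists P, HP; auto|].
  exists _, (closed_union HP HQ); split; [left; exact Pa | split; [right; exact Qc |]].
  exact (in_class_union r HP HQ Pb Qb HPr HQr).
- intros s a b [-> | [P [HP [Pa [Pb HPr]]]]]; [left; reflexivity | right].
  exists P, HP; split; [apply HP, Pa | split; [apply HP, Pb | exact HPr]].
Qed.

Lemma radsub_rel_closed (A : act S) (a : A) :
  (exists (P : A -> Prop) (HP : closed P), P a /\ in_class r (subact HP)) ->
  closed (cls (radsub_rel A) a).
Proof.
intros [P [HP [Pa HPr]]] s z [<- | [Q [HQ [Qa [Qz HQr]]]]]; right.
- exists P, HP; split; [exact Pa | split; [apply HP, Pa | exact HPr]].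
- exists Q, HQ; split; [exact Qa | split; [apply HQ, Qz | exact HQr]].
Qed.

Lemma radsub_rel_rees (A : act S) : rees (radsub_rel A).
Proof.
split; [apply radsub_rel_cong | intro a].
destruct (classic (exists (P : A -> Prop) (HP : closed P), P a /\ in_class r (subact HP)))
  as [Ha | Ha]; [left; apply radsub_rel_closed, Ha | right].
intros x [<- | [P [HP [Pa [_ HPr]]]]]; [reflexivity | exfalso; apply Ha; eauto].
Qed.

Lemma radsub_rel_sigma (A : act S) : sigma_sub r (radsub_rel A).
Proof.
intros a H _; apply (in_class_star r) with (exist _ a (or_introl eq_refl)).
intros [w [<- | [P [HP [Pa [Pw HPr]]]]]]; [apply (proj1 (rad_cong _ r _)) |].
assert (sub : forall x, P x -> cls (radsub_rel A) a x).
{ intros x Px; right; exists P, HP; auto. }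
exact (in_class_subact r HP H sub HPr _ _ _ _ Pw Pa).
Qed.

Lemma radsub_rel_max (A : act S) (rho : A -> A -> Prop) :
  rees rho -> sigma_sub r rho -> forall u v, rho u v -> radsub_rel A u v.
Proof.
intros [[Rr _] Hrees] Hsig u v Huv.
destruct (classic (u = v)) as [e | Hne]; [left; exact e | right].
destruct (Hrees u) as [Hcl | Hsing]; [| exfalso; apply Hne; symmetry; apply Hsing, Huv].
exists (cls rho u), Hcl; split; [apply Rr | split; [exact Huv |]].
apply Hsig; exists u, v; split; [apply Rr | split; [exact Huv | exact Hne]].
Qed.

Lemma radsub_rel_le (r' : hoehnke S) (A : act S) (x y : A) :
  (forall B, in_class r B -> in_class r' B) -> radsub_rel A x y -> r' A x y.
Proof.
intros Hrr' [<- | [P [HP [Px [Py HPr]]]]]; [apply (proj1 (rad_cong _ r' A)) |].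
assert (Hval : @is_hom S (subact HP) A (@proj1_sig _ P)) by (intros s z; reflexivity).
exact (in_class_hom r' Hval (Hrr' _ HPr) (exist P x Px) (exist P y Py)).
Qed.

Lemma radsub_rel_hom (A B : act S) (f : A -> B) :
  is_hom f -> forall a a', radsub_rel A a a' -> radsub_rel B (f a) (f a').
Proof.
intros Hf a a' [<- | [P [HP [Pa [Pa' HPr]]]]]; [left; reflexivity | right].
exists _, (closed_image Hf HP); split; [exists a; auto | split; [exists a'; auto |]].
exact (in_class_image r Hf HP HPr).
Qed.

Lemma radsub_preimage_in_class {A : act S} {Q : quot_act (radsub_rel_cong A) -> Prop}
  (HQ : closed Q) :
  in_class r (subact HQ) -> in_class r (subact (closed_preimage HQ)).
Proof.
apply (in_class_ext r (B := subact (closed_preimage HQ))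
         (fun x => exist Q (cl _ (proj1_sig x)) (proj2_sig x) : subact HQ)).
- intros s x; apply sig_ext, cl_hom.
- intros [X QX]; destruct (qcar_cl X) as [a ->]; exists (exist _ a QX); reflexivity.
- intros [x Px] [y Py] e; apply (f_equal (@proj1_sig _ _)) in e; simpl in e.
  apply (cl_eq (radsub_rel_cong A)) in e.
  destruct e as [<- | [P [HP [Px' [Py' HPr]]]]].
  + rewrite (proof_irrelevance _ Px Py); apply (proj1 (rad_cong _ r _)).
  + assert (sub : forall w, P w -> Q (cl (radsub_rel A) w)).
    { intros w Pw; enough (cl (radsub_rel A) x = cl (radsub_rel A) w) as <- by exact Px.
      apply (cl_eq (radsub_rel_cong A)); right; exists P, HP; auto. }
    exact (in_class_subact r HP _ sub HPr _ _ _ _ Px' Py').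
Qed.

Lemma radsub_rel_quot (A : act S) :
  rel_eq (radsub_rel (quot_act (radsub_rel_cong A))) eq.
Proof.
intros X Y; split; [| intros <-; left; reflexivity].
intros [e | [Q [HQ [QX [QY HQr]]]]]; [exact e |].
destruct (qcar_cl X) as [a ->], (qcar_cl Y) as [b ->].
apply (cl_eq (radsub_rel_cong A)); right.
exists _, (closed_preimage HQ); split; [exact QX | split; [exact QY |]].
exact (radsub_preimage_in_class HQ HQr).
Qed.

End RadicalSubacts.

Definition rk_hoehnke (r : hoehnke S) : hoehnke S :=
  @Hoehnke S (radsub_rel r) (radsub_rel_cong r) (@radsub_rel_hom r) (radsub_rel_quot r).

Lemma rk_iff (r : hoehnke S) (A : act S) (x y : A) : rk r x y <-> radsub_rel r A x y.
Proof.
split.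
- intro h; apply h; [apply radsub_rel_cong | intros rho; apply radsub_rel_max].
- intros h theta _ Hall; exact (Hall _ (radsub_rel_rees r A) (radsub_rel_sigma r A) x y h).
Qed.

Lemma in_class_rk (r : hoehnke S) (B : act S) : in_class (rk_hoehnke r) B <-> in_class r B.
Proof.
split; intros H x y.
- exact (radsub_rel_le r r B x y (fun _ h => h) (H x y)).
- right; exists (fun _ => True), (closed_all B); split; [exact I | split; [exact I |]].
  apply (in_class_surj r (C := subact (closed_all B)) (fun z : B => exist _ z I)); [| | exact H].
  + intros s z; apply sig_ext; reflexivity.
  + intros [z []]; exists z; reflexivity.
Qed.

Lemma rk_hoehnke_KA (r : hoehnke S) : is_KA (rk_hoehnke r).
Proof.
split; [| split].
- intro A; apply radsub_rel_rees.
- intros A a H Hnt; apply (in_class_rk r), (radsub_rel_sigma r A a H Hnt).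
- intros A Sys [Hsys _] B HB.
  destruct (Hsys B HB) as [HcB [[x [y [Bx [By Hne]]]] HBr]].
  apply (in_class_rk r) in HBr.
  assert (sub : forall z, B z -> radsub_rel r A x z) by (intros z Bz; right; exists B, HcB; auto).
  exists x; split; [split | exact sub].
  + apply radsub_rel_closed; exists B, HcB; split; [exact Bx | exact HBr].
  + exists x, y; split; [exact (sub x Bx) | split; [exact (sub y By) | exact Hne]].
Qed.

End Radicals.

Theorem proposition2p5 (S : monoid) (rh : hoehnke S) :
  (* (1) r_k is the least upper bound of the KA radicals below r_h *)
  ((forall r : hoehnke S, is_KA r -> rle r rh -> rle r (rk rh)) /\
   (forall r' : forall A : act S, A -> A -> Prop,
      (forall r : hoehnke S, is_KA r -> rle r rh -> rle r r') -> rle (rk rh) r'))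
  /\
  (* (2) r_k is the greatest lower bound of the Hoehnke radicals with class R_{r_h} *)
  ((forall r : hoehnke S, same_class r rh -> rle (rk rh) r) /\
   (forall r' : forall A : act S, A -> A -> Prop,
      (forall r : hoehnke S, same_class r rh -> rle r' r) -> rle r' (rk rh))).
Proof.
split; split.
- intros r [Hrees [Hsig _]] Hle A x y h; apply rk_iff.
  apply (radsub_rel_max rh A (r A) (Hrees A)); [| exact h].
  intros a H Hnt u v; apply Hle, (Hsig A a H Hnt).
- intros r' Hall A x y h.
  apply (Hall (rk_hoehnke rh) (rk_hoehnke_KA rh)); [| apply rk_iff, h].
  intros B u v; exact (radsub_rel_le rh rh B u v (fun _ H => H)).
- intros r Hsc A x y h; apply rk_iff in h.
  exact (radsub_rel_le rh r A x y (fun B => proj2 (Hsc B)) h).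
- intros r' Hall A x y h; apply rk_iff.
  exact (Hall (rk_hoehnke rh) (in_class_rk rh) A x y h).
Qed.
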